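(* Let $e_1,\dots,e_d$ be the standard basis of $\mathbb{R}^d$ and put $w_i=\lambda_i(e_1+\dots+e_i)$ for $i\in[1,d]$, where $\lambda_1\ge\lambda_2\ge\dots\ge\lambda_d>0$. Then the affine hyperplane $\mathcal H$ through $w_1,\dots,w_d$ intersects the set $Q=\lambda_d(e_1+\dots+e_d)-\mathbb{R}_+^d$ only in its boundary $\partial Q$. In particular, the Euclidean distance from $O$ to $\mathcal H$ is at least $\lambda_d$. *)

From HB Require Import structures.
From mathcomp Require Import all_boot all_order all_algebra.
From mathcomp Require Import all_classical all_reals all_analysis.
Set Implicit Arguments. Unset Strict Implicit. Unset Printing Implicit Defensive.
Import Order.TTheory GRing.Theory Num.Theory.
Import numFieldNormedType.Exports.
Local Open Scope classical_set_scope.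
Local Open Scope ring_scope.

Definition ebasis (R : realType) (d : nat) (i : 'I_d) : 'rV[R]_d := delta_mx 0 i.

Definition wvec (R : realType) (d : nat) (lam : 'I_d -> R) (i : 'I_d) : 'rV[R]_d :=
  lam i *: \sum_(j < d | (j <= i)%N) ebasis R j.

Definition affine_hull (R : realType) (d k : nat) (v : 'I_k -> 'rV[R]_d) : set 'rV[R]_d :=
  [set x | exists c : 'I_k -> R, \sum_(i < k) c i = 1 /\ x = \sum_(i < k) c i *: v i].

Definition Qset (R : realType) (d : nat) (a : R) : set 'rV[R]_d :=
  [set x | exists y : 'rV[R]_d, (forall j, 0 <= y 0 j) /\
                                 x = a *: \sum_(j < d) ebasis R j - y].

Definition boundary (T : topologicalType) (A : set T) : set T :=
  closure A `\` interior A.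

Definition eucl_norm (R : realType) (d : nat) (x : 'rV[R]_d) : R :=
  Num.sqrt (\sum_(j < d) x 0 j ^+ 2).

(** The weights [a_j = 1/lambda_(j+1) - 1/lambda_j] (with [1/lambda_0 = 0])
    are nonnegative, [a_1 > 0], their prefix sums are [1/lambda_i], and they
    sum to [1/lambda_d].  Hence the linear form [f z = sum_j a_j z_j]
    equals [1] at every [w_i], so on the whole affine hull [H], while on [Q]
    it is at most [lambda_d * sum_j a_j = 1].  A point of [H] inside [Q] is
    thus a maximiser of [f] over [Q], which cannot be interior since [f]
    strictly increases along [e_1 + ... + e_d].  Likewise a point with all
    coordinates below [lambda_d], in particular one of norm below
    [lambda_d], has [f < 1] and so lies off [H]. *)
From HB Require Import structures.
From mathcomp Require Import all_boot all_order all_algebra.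
From mathcomp Require Import all_classical all_reals all_analysis.
From mathcomp Require Import lra.
Set Implicit Arguments. Unset Strict Implicit. Unset Printing Implicit Defensive.
Import Order.TTheory GRing.Theory Num.Theory.
Import numFieldNormedType.Exports.
Local Open Scope classical_set_scope.
Local Open Scope ring_scope.

Lemma interior_shift_pos (R : realType) (V : normedModType R) (A : set V) (x v : V) :
  interior A x -> exists2 t : R, 0 < t & A (x + t *: v).
Proof.
move=> Ax.
have to_x : (fun t : R => x + t *: v) @ (0 : R) --> x.
  rewrite -[X in _ --> X]addr0 -(scale0r v).
  by apply: cvgD; [exact: cvg_cst | apply: cvgZr_tmp; exact: cvg_id].
have /nbhs_ballP [e /= e0 ballA] := to_x A Ax.
exists (e / 2); first by lra.
by apply: ballA; rewrite /ball /= sub0r normrN ger0_norm; lra.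
Qed.

Section LinearForm.
Variables (R : realType) (d : nat).
Implicit Types (a : 'I_d -> R) (x z : 'rV[R]_d).

Definition ones : 'rV[R]_d := \sum_(j < d) ebasis R j.

Definition dotv a z : R := \sum_k a k * z 0 k.

Lemma sum_ebasis_entry (P : pred 'I_d) k :
  (\sum_(j < d | P j) ebasis R j) 0 k = (P k)%:R.
Proof.
rewrite summxE; under eq_bigr do rewrite /ebasis mxE eqxx /=.
case Pk: (P k).
  rewrite (bigD1 k) //= eqxx big1 ?addr0 // => j /andP[_ /negbTE].
  by rewrite eq_sym => ->.
by rewrite big1 // => j Pj; case: eqP => // ekj; rewrite -ekj Pk in Pj.
Qed.

Lemma ones_entry k : ones 0 k = 1.
Proof. by rewrite sum_ebasis_entry. Qed.

Lemma dotv_affine_hull (m : nat) a (v : 'I_m -> 'rV[R]_d) x :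
  (forall i, dotv a (v i) = 1) -> affine_hull v x -> dotv a x = 1.
Proof.
move=> av1 [c [c1 ->]]; rewrite -c1 /dotv.
under eq_bigr do rewrite summxE mulr_sumr.
rewrite exchange_big /=; apply: eq_bigr => i _.
rewrite -[RHS]mulr1 -(av1 i) /dotv mulr_sumr.
by apply: eq_bigr => k _; rewrite mxE mulrCA.
Qed.

Lemma dotv_shift_ones a x t : dotv a (x + t *: ones) = dotv a x + t * \sum_k a k.
Proof.
rewrite /dotv mulr_sumr -big_split /=; apply: eq_bigr => k _.
by rewrite !mxE ones_entry mulr1 mulrDr [t * _]mulrC.
Qed.

Lemma dotv_Qset_le a c z : (forall k, 0 <= a k) -> Qset c z ->
  dotv a z <= c * \sum_k a k.
Proof.
move=> a_ge0 [y [y_ge0 ->]]; rewrite /dotv mulr_sumr.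
apply: ler_sum => k _; rewrite !mxE ones_entry mulr1 mulrBr mulrC lerBlDr lerDl.
exact: mulr_ge0.
Qed.

Lemma dotv_level_Qset_boundary a c x :
  (forall k, 0 <= a k) -> 0 < \sum_k a k ->
  dotv a x = c * \sum_k a k -> Qset c x -> boundary (Qset c) x.
Proof.
move=> a_ge0 sum_gt0 ax Qx; split; first exact: subset_closure.
move=> /(interior_shift_pos ones) [t t_gt0 /(dotv_Qset_le a_ge0)].
by rewrite dotv_shift_ones ax gerDl leNgt mulr_gt0.
Qed.

Lemma entry_le_eucl_norm x k : x 0 k <= eucl_norm x.
Proof.
apply: le_trans (ler_norm _) _.
rewrite -sqrtr_sqr /eucl_norm ler_sqrt; last first.
  by apply: sumr_ge0 => j _; exact: sqr_ge0.
by rewrite (bigD1 k) //= lerDl; apply: sumr_ge0 => j _; exact: sqr_ge0.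
Qed.

Lemma dotv_level_eucl_norm_ge a k0 c x :
  (forall k, 0 <= a k) -> 0 < a k0 ->
  dotv a x = c * \sum_k a k -> c <= eucl_norm x.
Proof.
move=> a_ge0 a0 ax; rewrite leNgt; apply/negP => normx.
have x_lt k : x 0 k < c by apply: le_lt_trans (entry_le_eucl_norm x k) normx.
suff : dotv a x < c * \sum_k a k by rewrite ax ltxx.
rewrite /dotv mulr_sumr (bigD1 k0) // [X in _ < X](bigD1 k0) //=.
apply: ltr_leD; first by rewrite [c * _]mulrC ltr_pM2l.
by apply: ler_sum => k _; rewrite [c * _]mulrC ler_wpM2l // ltW.
Qed.

End LinearForm.

Section Weights.
Variables (R : realType) (n : nat) (lam : 'I_n.+1 -> R).
Hypothesis lam_noninc : forall i j : 'I_n.+1, (i <= j)%N -> lam j <= lam i.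
Hypothesis lam_gt0 : 0 < lam ord_max.

(* [inv_lam k = 1 / lambda_k] in the paper's 1-based indexing, [inv_lam 0 = 0]. *)
Let inv_lam (k : nat) : R := if k is k'.+1 then (lam (inord k'))^-1 else 0.

Definition hyperplane_weight (j : 'I_n.+1) : R := inv_lam j.+1 - inv_lam j.

Lemma lam_pos i : 0 < lam i.
Proof. by apply: lt_le_trans lam_gt0 _; apply: lam_noninc; exact: leq_ord. Qed.

Lemma hyperplane_weight_prefix (i : 'I_n.+1) :
  \sum_(j < n.+1 | (j <= i)%N) hyperplane_weight j = (lam i)^-1.
Proof.
rewrite -(big_ord_widen _ (fun j => inv_lam j.+1 - inv_lam j) (ltn_ord i)).
rewrite -(big_mkord xpredT (fun j => inv_lam j.+1 - inv_lam j)) telescope_sumr //.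
by rewrite /inv_lam subr0 inord_val.
Qed.

Lemma hyperplane_weight_sum : \sum_j hyperplane_weight j = (lam ord_max)^-1.
Proof.
by rewrite -hyperplane_weight_prefix; apply: eq_bigl => j; rewrite -ltnS ltn_ord.
Qed.

Lemma hyperplane_weight0_gt0 : 0 < hyperplane_weight ord0.
Proof. by rewrite /hyperplane_weight /= subr0 invr_gt0 lam_pos. Qed.

Lemma hyperplane_weight_ge0 j : 0 <= hyperplane_weight j.
Proof.
case: j => [[|k] kn]; first exact: ltW hyperplane_weight0_gt0.
rewrite /hyperplane_weight /= subr_ge0 lef_pV2 ?posrE ?lam_pos //.
by apply: lam_noninc; rewrite !inordK // ltnW.
Qed.

Lemma dotv_wvec i : dotv hyperplane_weight (wvec lam i) = 1.
Proof.
transitivity (lam i * \sum_(k < n.+1 | (k <= i)%N) hyperplane_weight k).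
  rewrite mulr_sumr [RHS]big_mkcond /=; apply: eq_bigr => k _.
  rewrite mxE sum_ebasis_entry mulrCA.
  by case: (k <= i)%N; rewrite ?mulr1 ?mulr0.
by rewrite hyperplane_weight_prefix mulfV // gt_eqF ?lam_pos.
Qed.

Lemma affine_hull_wvec_level x : affine_hull (wvec lam) x ->
  dotv hyperplane_weight x = lam ord_max * \sum_j hyperplane_weight j.
Proof.
move=> /(dotv_affine_hull dotv_wvec) ->.
by rewrite hyperplane_weight_sum mulfV // gt_eqF.
Qed.

End Weights.

Theorem lemma2p4 (R : realType) (n : nat) (lam : 'I_n.+1 -> R)
  (hmono : forall i j : 'I_n.+1, (i <= j)%N -> lam j <= lam i)
  (hpos : 0 < lam ord_max) :
  (affine_hull (wvec lam) `&` @Qset R n.+1 (lam ord_max)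
     `<=` boundary (@Qset R n.+1 (lam ord_max)))
  /\ (forall x, affine_hull (wvec lam) x -> lam ord_max <= eucl_norm x).
Proof.
have a_ge0 := hyperplane_weight_ge0 hmono hpos.
have hx := affine_hull_wvec_level hmono hpos.
split.
  move=> x [Hx Qx]; apply: dotv_level_Qset_boundary a_ge0 _ (hx x Hx) Qx.
  by rewrite hyperplane_weight_sum invr_gt0.
move=> x Hx; apply: dotv_level_eucl_norm_ge a_ge0 _ (hx x Hx).
exact: hyperplane_weight0_gt0 hmono hpos.
Qed.
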